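(* Let $BT$ be a boosted tree over attributes $A_1,\ldots,A_n$ and $\vec x\in\vec X$. If $t$ is a tree-specific explanation for $\vec x$ given $BT$, then $t$ is an abductive explanation for $\vec x$ given $BT$. (This holds both in the binary case $BT=\{F\}$ and in the multi-class case $BT=\{F^1,\ldots,F^m\}$.)
   Context: Attributes $A_1,\ldots,A_n$: each $A_i$ has a domain $D_i$ which is either a totally ordered set of numbers, a set of unordered (categorical) values, or $\{0,1\}$. An instance is $\vec x=(v_1,\ldots,v_n)$ with $v_i\in D_i$; $\vec X$ is the set of all instances; $t_{\vec x}=\{(A_i=v_i):i\in[n]\}$. An instance $\vec x'$ extends $t$ if $t\subseteq t_{\vec x'}$. A regression tree is a finite binary tree whose internal nodes are labelled by Boolean conditions on single attributes ($A_i>v$, $A_i=v$, or $A_i=1$ depending on the attribute type) and whose leaves are labelled by real numbers; $w(T,\vec x)$ is the label of the leaf reached by following, from the root, the branch determined by whether $\vec x$ satisfies each node's condition. For a tree $T$ and $t\subseteq t_{\vec x}$: $w_\downarrow(t,T)=\min\{w(T,\vec x'):\vec x'\text{ extends }t\}$ and $w_\uparrow(t,T)=\max\{w(T,\vec x'):\vec x'\text{ extends }t\}$. A forest $F=\{T_1,\ldots,T_p\}$ has weight $w(F,\vec x)=\sum_k w(T_k,\vec x)$. Binary case: $BT=\{F\}$, $BT(\vec x)=1$ if $w(F,\vec x)>0$, else $0$. Multi-class case: $BT=\{F^1,\ldots,F^m\}$, $m>1$, $F^j=\{T^j_1,\ldots,T^j_{p_j}\}$; $BT(\vec x)=j$ iff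 $w(F^j,\vec x)>w(F^k,\vec x)$ for all $k\neq j$, and $BT(\vec x)$ is a preset element of $[m]$ if all $w(F^j,\vec x)$ are equal. Abductive explanation: $t\subseteq t_{\vec x}$ such that every $\vec x'$ extending $t$ has $BT(\vec x')=BT(\vec x)$. Tree-specific explanation, binary case: if $BT(\vec x)=1$, $t\subseteq t_{\vec x}$ with $\sum_{k=1}^p w_\downarrow(t,T_k)>0$ and no proper subset of $t$ satisfying this; if $BT(\vec x)=0$, $t\subseteq t_{\vec x}$ with $\sum_{k=1}^p w_\uparrow(t,T_k)\le 0$ and no proper subset satisfying this. Multi-class case with $BT(\vec x)=i$: $t\subseteq t_{\vec x}$ such that for every $j\in[m]\setminus\{i\}$, $\sum_{k=1}^{p_i}w_\downarrow(t,T^i_k)>\sum_{k=1}^{p_j}w_\uparrow(t,T^j_k)$, and no proper subset of $t$ satisfies this condition. *)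

From HB Require Import structures.
From mathcomp Require Import all_boot all_order all_algebra.
From mathcomp Require Import boolp classical_sets reals.
Set Implicit Arguments. Unset Strict Implicit. Unset Printing Implicit Defensive.
Import Order.TTheory GRing.Theory Num.Theory.
Local Open Scope classical_set_scope.
Local Open Scope ring_scope.

(* Kind of the domain D_i of an attribute:
   - ANum S : a totally ordered set of numbers S (a subset of R),
   - ACat T : a set of unordered (categorical) values (an eqType T),
   - ABin   : the Boolean domain {0,1} (encoded as bool, 1 = true). *)
Inductive attr_dom (R : realType) : Type :=
| ANum of set R
| ACat of eqType
| ABin.

Definition dom_type (R : realType) (a : attr_dom R) : Type :=
  match a with
  | ANum Dn => {r : R | Dn r}
  | ACat T => Equality.sort T
  | ABin => bool
  end.

Definition cond_val (R : realType) (a : attr_dom R) : Type :=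
  match a with
  | ANum _ => R
  | ACat T => Equality.sort T
  | ABin => unit
  end.

Definition eval_cond (R : realType) (a : attr_dom R) :
  cond_val a -> dom_type a -> bool :=
  match a return cond_val a -> dom_type a -> bool with
  | ANum _ => fun v x => v < sval x
  | ACat T => fun v x => x == v
  | ABin => fun _ x => x
  end.

Definition instance (R : realType) (n : nat) (D : 'I_n -> attr_dom R) : Type :=
  forall i : 'I_n, dom_type (D i).

Inductive rtree (R : realType) (n : nat) (D : 'I_n -> attr_dom R) : Type :=
| Leaf of R
| Node (i : 'I_n) (v : cond_val (D i)) (l r : rtree D).

Fixpoint weight (R : realType) (n : nat) (D : 'I_n -> attr_dom R)
  (T : rtree D) (x : instance D) : R :=
  match T with
  | Leaf w => w
  | Node i v l r => if eval_cond v (x i) then weight l x else weight r x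
  end.

(* A subset t of t_x is represented by the set S of attribute indices it
   mentions: t = {(A_i = x_i) : i in S}.  x' extends t iff x'_i = x_i on S. *)
Definition extends (R : realType) (n : nat) (D : 'I_n -> attr_dom R)
  (x : instance D) (S : {set 'I_n}) (x' : instance D) : Prop :=
  forall i, i \in S -> x' i = x i.

(* w_down(t,T) = min { w(T,x') : x' extends t }, w_up(t,T) = max {...}.
   The set is finite and nonempty, so inf/sup are its min/max. *)
Definition w_down (R : realType) (n : nat) (D : 'I_n -> attr_dom R)
  (x : instance D) (S : {set 'I_n}) (T : rtree D) : R :=
  inf [set weight T x' | x' in extends x S].

Definition w_up (R : realType) (n : nat) (D : 'I_n -> attr_dom R)
  (x : instance D) (S : {set 'I_n}) (T : rtree D) : R :=
  sup [set weight T x' | x' in extends x S].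

Definition forest (R : realType) (n : nat) (D : 'I_n -> attr_dom R) :=
  seq (rtree D).

Definition fweight (R : realType) (n : nat) (D : 'I_n -> attr_dom R)
  (F : forest D) (x : instance D) : R := \sum_(T <- F) weight T x.

Definition sum_down (R : realType) (n : nat) (D : 'I_n -> attr_dom R)
  (F : forest D) (x : instance D) (S : {set 'I_n}) : R :=
  \sum_(T <- F) w_down x S T.

Definition sum_up (R : realType) (n : nat) (D : 'I_n -> attr_dom R)
  (F : forest D) (x : instance D) (S : {set 'I_n}) : R :=
  \sum_(T <- F) w_up x S T.

Definition abductive (R : realType) (n : nat) (D : 'I_n -> attr_dom R)
  (Y : eqType) (f : instance D -> Y) (x : instance D) (S : {set 'I_n}) : Prop :=
  forall x', extends x S x' -> f x' = f x.

Definition bin_class (R : realType) (n : nat) (D : 'I_n -> attr_dom R)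
  (F : forest D) (x : instance D) : bool := 0 < fweight F x.

Definition tree_specific_bin (R : realType) (n : nat) (D : 'I_n -> attr_dom R)
  (F : forest D) (x : instance D) (S : {set 'I_n}) : Prop :=
  if bin_class F x then
    0 < sum_down F x S /\ (forall S' : {set 'I_n}, (S' \proper S)%bool -> ~ (0 < sum_down F x S'))
  else
    sum_up F x S <= 0 /\ (forall S' : {set 'I_n}, (S' \proper S)%bool -> ~ (sum_up F x S' <= 0)).

(* Multi-class case: classes 'I_m, forests F j.  cls is any function meeting the
   paper's definition of BT: cls x = j when F j has strictly largest weight, and
   cls x = d (the preset class) when all weights are equal. *)
Definition multi_class_spec (R : realType) (n : nat) (D : 'I_n -> attr_dom R)
  (m : nat) (F : 'I_m -> forest D) (d : 'I_m) (cls : instance D -> 'I_m) : Prop :=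
  forall x j,
    ((forall k, k != j -> fweight (F k) x < fweight (F j) x) -> cls x = j) /\
    ((forall k, fweight (F k) x = fweight (F j) x) -> cls x = d).

Definition ts_multi_cond (R : realType) (n : nat) (D : 'I_n -> attr_dom R)
  (m : nat) (F : 'I_m -> forest D) (i : 'I_m) (x : instance D)
  (S : {set 'I_n}) : Prop :=
  forall j, j != i -> sum_up (F j) x S < sum_down (F i) x S.

Definition tree_specific_multi (R : realType) (n : nat) (D : 'I_n -> attr_dom R)
  (m : nat) (F : 'I_m -> forest D) (cls : instance D -> 'I_m)
  (x : instance D) (S : {set 'I_n}) : Prop :=
  ts_multi_cond F (cls x) x S /\
  (forall S' : {set 'I_n}, (S' \proper S)%bool -> ~ ts_multi_cond F (cls x) x S').

(* The weights of a tree are bounded (by the sum of the absolute values of its leaves), so the inf and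
   sup defining w_down and w_up really bound w(T,x') for every extension x' of t.  Summing over a
   forest, the inequality defining a tree-specific explanation therefore holds for w(F,x') at every
   extension x', and that fixes its class. *)
From HB Require Import structures.
From mathcomp Require Import all_boot all_order all_algebra.
From mathcomp Require Import boolp classical_sets reals.
Import Order.TTheory GRing.Theory Num.Theory.
Local Open Scope classical_set_scope.
Local Open Scope ring_scope.

Section ForestBounds.

Variables (R : realType) (n : nat) (D : 'I_n -> attr_dom R).

Fixpoint leaf_norm_sum (T : rtree D) : R :=
  match T with
  | Leaf w => `|w|
  | Node _ _ l r => leaf_norm_sum l + leaf_norm_sum r
  end.

Lemma normr_weight_le (T : rtree D) (x : instance D) : `|weight T x| <= leaf_norm_sum T.
Proof.
elim: T => [w|i v l IHl r IHr] //=.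
have ge0_l : 0 <= leaf_norm_sum l by apply: le_trans IHl.
have ge0_r : 0 <= leaf_norm_sum r by apply: le_trans IHr.
by case: eval_cond; [apply: le_trans IHl _; rewrite lerDl | apply: le_trans IHr _; rewrite lerDr].
Qed.

Variables (x : instance D) (S : {set 'I_n}).

Lemma w_down_le_weight (T : rtree D) {x' : instance D} :
  extends x S x' -> w_down x S T <= weight T x'.
Proof.
move=> ext_x'; apply: ge_inf; last by exists x'.
exists (- leaf_norm_sum T) => _ [y _ <-].
by have := normr_weight_le T y; rewrite ler_norml => /andP[].
Qed.

Lemma weight_le_w_up (T : rtree D) {x' : instance D} :
  extends x S x' -> weight T x' <= w_up x S T.
Proof.
move=> ext_x'; apply: ub_le_sup; last by exists x'.
exists (leaf_norm_sum T) => _ [y _ <-].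
exact: le_trans (ler_norm _) (normr_weight_le T y).
Qed.

Lemma sum_down_le_fweight (F : forest D) {x' : instance D} :
  extends x S x' -> sum_down F x S <= fweight F x'.
Proof. by move=> ext_x'; apply: ler_sum => T _; apply: w_down_le_weight. Qed.

Lemma fweight_le_sum_up (F : forest D) {x' : instance D} :
  extends x S x' -> fweight F x' <= sum_up F x S.
Proof. by move=> ext_x'; apply: ler_sum => T _; apply: weight_le_w_up. Qed.

Lemma tree_specific_bin_abductive (F : forest D) :
  tree_specific_bin F x S -> abductive (bin_class F) x S.
Proof.
rewrite /tree_specific_bin /bin_class => + x' ext_x'.
case: ifP => _ [sum_S _].
- exact: lt_le_trans sum_S (sum_down_le_fweight F ext_x').
- by apply/negbTE; rewrite -leNgt (le_trans _ sum_S) ?fweight_le_sum_up.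
Qed.

Lemma ts_multi_cond_abductive (m : nat) (F : 'I_m -> forest D) (d : 'I_m)
    (cls : instance D -> 'I_m) (i : 'I_m) :
  multi_class_spec F d cls -> ts_multi_cond F i x S ->
  forall x', extends x S x' -> cls x' = i.
Proof.
move=> cls_spec sum_S x' ext_x'; apply: (proj1 (cls_spec x' i)) => k k_neq_i.
apply: le_lt_trans (fweight_le_sum_up (F k) ext_x') _.
exact: lt_le_trans (sum_S k k_neq_i) (sum_down_le_fweight (F i) ext_x').
Qed.

End ForestBounds.

Theorem proposition4 (R : realType) (n : nat) (D : 'I_n -> attr_dom R) :
  (forall (F : forest D) (x : instance D) (S : {set 'I_n}),
      tree_specific_bin F x S -> abductive (bin_class F) x S) /\
  (forall (m : nat) (F : 'I_m -> forest D) (d : 'I_m) (cls : instance D -> 'I_m),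
      (1 < m)%N -> multi_class_spec F d cls ->
      forall (x : instance D) (S : {set 'I_n}),
        tree_specific_multi F cls x S -> abductive cls x S).
Proof.
split; first by move=> F x S; apply: tree_specific_bin_abductive.
move=> m F d cls _ cls_spec x S [sum_S _].
exact: ts_multi_cond_abductive cls_spec sum_S.
Qed.
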